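(* Let $M$ be a unique expansion matroid on a finite set $E$ with $r(M)>0$, and write $F(M)=\{K_1,K_2,\dots,K_t\}$ with the $K_i$ distinct. Then $\mathcal{B}(M)=\{\{b_1,b_2,\dots,b_t\}: b_i\in K_i,\ 1\le i\le t\}$.
   Context: For a matroid $M$: $\mathcal{I}(M)$ its independent sets, $\mathcal{B}(M)$ its bases, $r(M)$ the size of a base, $r(X)$ the rank of $X\subseteq E$. $s(M)=\{A\in\mathcal{I}(M): |A|=r(M)-1\}$; $K_M(X)=\{a\in E: r(X\cup\{a\})=r(X)+1\}$; $F(M)=\{K_M(X): X\in s(M)\}$. $M$ is a unique expansion matroid if for every $B\in\mathcal{B}(M)$ and every $A\in s(M)$, whenever $e_1,e_2\in B$ satisfy $A\cup\{e_1\}\in\mathcal{B}(M)$ and $A\cup\{e_2\}\in\mathcal{B}(M)$, then $e_1=e_2$. *)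

From mathcomp Require Import all_boot.
Set Implicit Arguments. Unset Strict Implicit. Unset Printing Implicit Defensive.

Section Matroid.
Variable E : finType.
Implicit Types (I : {set {set E}}) (A B X : {set E}).

Definition is_matroid I : Prop :=
  [/\ set0 \in I,
      (forall A B, B \in I -> A \subset B -> A \in I) &
      (forall A B, A \in I -> B \in I -> #|A| < #|B| ->
         exists2 x, x \in B :\: A & x |: A \in I)].

Definition bases I : {set {set E}} := [set B | maxset (fun A => A \in I) B].

Definition rank I X : nat := \max_(A in I | A \subset X) #|A|.

Definition mrank I : nat := rank I setT.

Definition sM I : {set {set E}} := [set A in I | #|A| == (mrank I).-1].

Definition KM I X : {set E} := [set a | rank I (a |: X) == (rank I X).+1].

Definition FM I : {set {set E}} := [set KM I X | X in sM I].

Definition unique_expansion I : Prop :=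
  forall B A e1 e2, B \in bases I -> A \in sM I ->
    e1 \in B -> e2 \in B ->
    e1 |: A \in bases I -> e2 |: A \in bases I -> e1 = e2.

End Matroid.

(* Every element of F(M) is K_M(A) = {a | A + a is a base} for some A in s(M).
   Unique expansion says that a base B meets each such K in at most one point,
   and augmentation says that it meets it in at least one.  Consequently two
   members of F(M) sharing an element coincide: their elements can be traded
   for one another inside a base.  So the members of F(M) are disjoint blocks,
   every base is a transversal of them (b in B lies in the block K_M(B - b)),
   and exchanging the element of a base inside one block yields a base again;
   finitely many such exchanges turn any base into any given transversal. *)

From mathcomp Require Import all_boot.
Set Implicit Arguments. Unset Strict Implicit. Unset Printing Implicit Defensive.

Section MatroidBases.
Variables (E : finType) (I : {set {set E}}).
Hypothesis matroidI : is_matroid I.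

Lemma card_le_mrank A : A \in I -> #|A| <= mrank I.
Proof.
move=> AI; apply: (leq_bigmax_cond (F := fun A : {set E} => #|A|)).
by rewrite AI subsetT.
Qed.

Lemma rank_indep A : A \in I -> rank I A = #|A|.
Proof.
move=> AI; apply/eqP; rewrite eqn_leq; apply/andP; split.
- by apply/bigmax_leqP => C /andP[_ sCA]; apply: subset_leq_card.
- by apply: (leq_bigmax_cond (F := fun A : {set E} => #|A|)); rewrite AI subxx.
Qed.

Lemma exists_indep_mrank : exists2 A, A \in I & #|A| = mrank I.
Proof.
case: matroidI => I0 _ _.
have I0T : (set0 \in I) && (set0 \subset [set: E]) by rewrite I0 sub0set.
rewrite /mrank /rank (bigmax_eq_arg set0) //.
by case: arg_maxnP => // A /andP[AI _] _; exists A.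
Qed.

Lemma basesP B : B \in bases I <-> B \in I /\ #|B| = mrank I.
Proof.
have [A AI cardA] := exists_indep_mrank; case: matroidI => _ _ augment.
rewrite inE; split.
- move=> /maxsetP[BI maxB]; split=> //; apply/eqP.
  rewrite eqn_leq card_le_mrank //= leqNgt; apply/negP => ltBA.
  have [x /setDP[_ xB] xBI] := augment _ _ BI AI ltac:(by rewrite cardA).
  by move: xB; rewrite -(maxB _ xBI (subsetUr _ _)) setU11.
- move=> [BI cardB]; apply/maxsetP; split=> // C CI sBC.
  by apply/eqP; rewrite eq_sym eqEcard sBC cardB card_le_mrank.
Qed.

Lemma exists_base : exists B, B \in bases I.
Proof. by have [A AI cardA] := exists_indep_mrank; exists A; apply/basesP. Qed.

Lemma base_setD1_sM B b : B \in bases I -> b \in B -> B :\ b \in sM I.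
Proof.
move=> /basesP[BI cardB] bB; case: matroidI => _ down _.
by rewrite inE (down _ _ BI (subsetDl _ _)) -cardB (cardsD1 b B) bB add1n succnK eqxx.
Qed.

Hypothesis mrank_gt0 : 0 < mrank I.

Lemma mem_KM A a : A \in sM I -> (a \in KM I A) = (a |: A \in bases I).
Proof.
rewrite inE => /andP[AI /eqP cardA].
rewrite inE (rank_indep AI) cardA prednK //; apply/idP/idP => [/eqP rankaA|].
- have rank_le : a |: A \notin I -> rank I (a |: A) <= #|A|.
    move=> aAnI; apply/bigmax_leqP => C /andP[CI sCaA].
    have ltC : #|C| < #|a |: A|.
      rewrite ltn_neqAle subset_leq_card // andbT; apply: contraNneq aAnI => eqC.
      suff <- : C = a |: A by [].
      by apply/eqP; rewrite eqEcard sCaA eqC leqnn.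
    by rewrite -ltnS (leq_trans ltC) // cardsU1 -add1n leq_add2r leq_b1.
  have aAI : a |: A \in I.
    apply/negPn/negP => /rank_le.
    by rewrite rankaA cardA leqNgt ltn_predL mrank_gt0.
  by apply/basesP; rewrite -rankaA rank_indep.
- by case/basesP => aAI cardaA; rewrite (rank_indep aAI) cardaA.
Qed.

Lemma KM_notin A a : A \in sM I -> a \in KM I A -> a \notin A.
Proof.
move=> AsM; rewrite mem_KM // => /basesP[_ /eqP]; move: AsM.
rewrite inE cardsU1 => /andP[_ /eqP ->]; apply: contraTN => aA.
by rewrite aA add0n ltn_eqF // ltn_predL.
Qed.

Lemma base_meets_KM A C : A \in sM I -> C \in bases I ->
  exists2 x, x \in C & x \in KM I A.
Proof.
move=> AsM /basesP[CI cardC]; have := AsM; rewrite inE => /andP[AI /eqP cardA].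
case: matroidI => _ _ augment.
have [x /setDP[xC xA] xAI] := augment _ _ AI CI ltac:(by rewrite cardA cardC prednK).
exists x; rewrite // mem_KM //; apply/basesP; split=> //.
by rewrite cardsU1 xA cardA add1n prednK.
Qed.

Section UniqueExpansion.
Hypothesis uniqueI : unique_expansion I.

Lemma KM_subset A A' b : A \in sM I -> A' \in sM I ->
  b \in KM I A -> b \in KM I A' -> KM I A \subset KM I A'.
Proof.
move=> AsM A'sM bK bK'.
have A_notin_K' a : a \in A -> a \notin KM I A'.
  (* both a and b lie in the base b + A and expand A' *)
  move=> aA; apply/negP => aK'.
  have ab : a = b.
    by apply: (uniqueI (B := b |: A) (A := A')); rewrite ?setU11 ?setU1r -?mem_KM.
  by move: (KM_notin AsM bK); rewrite -ab aA.
apply/subsetP => e eK; rewrite mem_KM // in eK.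
have [x /setU1P[-> //|xA] xK'] := base_meets_KM A'sM eK.
by rewrite (negPf (A_notin_K' _ xA)) in xK'.
Qed.

Lemma eq_FM_of_mem K K' x : K \in FM I -> K' \in FM I -> x \in K -> x \in K' -> K = K'.
Proof.
move=> /imsetP[A AsM ->] /imsetP[A' A'sM ->] xK xK'.
by apply/eqP; rewrite eqEsubset !(KM_subset _ _ xK xK', KM_subset _ _ xK' xK).
Qed.

Lemma KM_base_setD1 B b : B \in bases I -> b \in B ->
  KM I (B :\ b) \in FM I /\ b \in KM I (B :\ b).
Proof.
move=> BB bB; have BbsM := base_setD1_sM BB bB.
by rewrite imset_f // mem_KM // setD1K.
Qed.

Lemma base_exchange_FM B K b x : B \in bases I -> K \in FM I ->
  b \in B -> b \in K -> x \in K -> x |: (B :\ b) \in bases I.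
Proof.
move=> BB KF bB bK xK; have [KbF bKb] := KM_base_setD1 BB bB.
by rewrite -mem_KM ?base_setD1_sM // -(eq_FM_of_mem KF KbF bK bKb).
Qed.

Variable f : {set E} -> E.
Hypothesis f_transversal : forall K, K \in FM I -> f K \in K.

Lemma transversal_base_eq B : B \in bases I ->
  (forall K, K \in FM I -> f K \in B) -> B = f @: FM I.
Proof.
move=> BB fB; apply/setP => y; apply/idP/imsetP => [yB|[K KF ->]]; last exact: fB.
have [KyF yK] := KM_base_setD1 BB yB; exists (KM I (B :\ y)) => //.
by apply: (uniqueI BB (base_setD1_sM BB yB) yB (fB _ KyF));
  rewrite ?setD1K // -mem_KM ?base_setD1_sM ?f_transversal.
Qed.

Lemma transversal_base_from n B : B \in bases I ->
  #|[set K in FM I | f K \notin B]| = n -> f @: FM I \in bases I.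
Proof.
elim: n B => [|n IHn] B BB.
- move/eqP; rewrite cards_eq0 => /eqP noK; rewrite -(transversal_base_eq BB) // => K KF.
  by apply: contraT => fKB; rewrite -(in_set0 K) -noK inE KF fKB.
move=> cardn; have [K] : exists K, K \in [set K in FM I | f K \notin B].
  by apply/set0Pn; rewrite -card_gt0 cardn.
rewrite inE => /andP[KF fKB].
have [b bB bK] : exists2 b, b \in B & b \in K.
  by case/imsetP: KF => A AsM ->; apply: base_meets_KM.
apply: (IHn _ (base_exchange_FM BB KF bB bK (f_transversal KF))).
have badE : [set K' in FM I | f K' \notin f K |: (B :\ b)] =
            [set K' in FM I | f K' \notin B] :\ K.
  apply/setP => K'; rewrite !inE; have [->|neK] := eqVneq K' K.
    by rewrite eqxx andbF.
  case K'F : (K' \in FM I) => //=.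
  (* f K' lies in the block K', which is disjoint from K, the block of f K and b *)
  have outK y : y \in K -> f K' != y.
    move=> yK; apply: contra_neq neK => fK'y.
    by apply: eq_FM_of_mem K'F KF (f_transversal K'F) _; rewrite fK'y.
  by rewrite (negPf (outK _ (f_transversal KF))) (negPf (outK _ bK)).
apply/eqP; rewrite -eqSS -cardn badE (cardsD1 K [set K' in FM I | f K' \notin B]).
by rewrite inE KF fKB.
Qed.

End UniqueExpansion.
End MatroidBases.

Theorem proposition8 (E : finType) (I : {set {set E}}) :
  is_matroid I -> unique_expansion I -> 0 < mrank I ->
  forall B : {set E},
    B \in bases I <->
    exists f : {set E} -> E,
      (forall K, K \in FM I -> f K \in K) /\ B = f @: FM I.
Proof.
move=> matroidI uniqueI mrank_gt0 B; split=> [BB|[f [f_tr ->]]].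
- have [x0 _] : exists x0, x0 \in B.
    by apply/set0Pn; rewrite -card_gt0; case/(basesP matroidI): BB => _ ->.
  pose f K := odflt x0 [pick x in B :&: K].
  have f_in K : K \in FM I -> f K \in B :&: K.
    case/imsetP=> A AsM ->; have [y yB yK] := base_meets_KM matroidI mrank_gt0 AsM BB.
    by rewrite /f; case: pickP => [//|/(_ y)]; rewrite inE yB yK.
  exists f; split=> [K /f_in /setIP[] //|].
  by apply: transversal_base_eq => // K /f_in /setIP[].
- have [B0 B0B] := exists_base matroidI.
  exact: (transversal_base_from matroidI mrank_gt0 uniqueI f_tr B0B erefl).
Qed.
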